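(* Let $G=(V,E,L)$ be a complete hypergraph with loops, with $n:=|V|$ nodes, such that $L=L^+=\{\{j,j\}\}$ for some $j\in V$ (a single plus loop and no minus loops). Then $$\mathrm{PP}(G)=\Big\{z\in\mathbb{R}^{V\cup E\cup L}:\ z_{jj}\ \ge \sum_{J\subseteq V:\, j\in J}\frac{\big(\ell_n(J,V\setminus J)\big)^2}{\ell_{n-1}(J\setminus\{j\},V\setminus J)},\quad \ell_n(J,V\setminus J)\ge 0\ \ \forall J\subseteq V\Big\}.$$
   Context: A hypergraph with loops is a triple $G=(V,E,L)$ where $V$ is a finite node set, $E$ is a set of subsets of $V$ each of cardinality at least two (edges), and $L$ is a set of loops, each written $\{i,i\}$ for some $i\in V$ (at most one per node), partitioned as $L=L^-\cup L^+$ into minus loops and plus loops. $G$ is complete if $E$ consists of all subsets of $V$ of cardinality at least two. For such $G$, $$\mathrm{PP}(G):=\mathrm{conv}\Big\{z\in\mathbb{R}^{V\cup E\cup L}: z_{ii}\ge z_i^2\ \forall\{i,i\}\in L^+,\ z_{ii}\le z_i^2\ \forall \{i,i\}\in L^-,\ z_e=\prod_{i\in e}z_i\ \forall e\in E,\ z_i\in[0,1]\ \forall i\in V\Big\},$$ where coordinates are indexed by nodes ($z_i$), edges ($z_e$) and loops ($z_{ii}$). For a subset $S\subseteq V$ write $z_S$ with the conventions $z_\emptyset:=1$, $z_{\{i\}}:=z_i$, and $z_S$ the edge coordinate when $|S|\ge2$ (loop coordinates $z_{ii}$ are distinct from these). For disjoint $J_1,J_2\subseteq V$ with $|J_1\cup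 J_2|=d$, define $\ell_d(J_1,J_2):=\sum_{t\subseteq J_2}(-1)^{|t|}z_{J_1\cup t}$. Any expression $u^2/v$ denotes the closure of the perspective: it equals $u^2/v$ if $v>0$, $0$ if $u=v=0$, and $+\infty$ if $u\ne0$, $v=0$. *)

From HB Require Import structures.
From mathcomp Require Import all_boot all_order all_algebra.
From mathcomp Require Import reals constructive_ereal.
Set Implicit Arguments. Unset Strict Implicit. Unset Printing Implicit Defensive.
Import Order.TTheory GRing.Theory Num.Theory.
Local Open Scope ring_scope.

(* Node set V = 'I_n.  For the complete hypergraph, the node and edge
   coordinates are indexed exactly by the nonempty subsets of V
   (singletons {i} <-> node i, subsets of size >= 2 <-> edges). *)
Definition Idx (n : nat) := {S : {set 'I_n} | S != set0}.

(* A point z of R^{V u E u L} with L = {{j,j}} is a pair (y, t) where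
   y : Idx n -> R collects the node/edge coordinates and t = z_jj. *)

(* z_S with the convention z_emptyset = 1, z_{i} = z_i, z_S = edge coord. *)
Definition zS (R : realType) (n : nat) (y : Idx n -> R) (S : {set 'I_n}) : R :=
  match @insub _ (fun S : {set 'I_n} => S != set0) (Idx n) S with
  | Some s => y s
  | None => 1
  end.

(* ell_d(J1, J2) = sum_{t subset J2} (-1)^{|t|} z_{J1 u t}; d = |J1 u J2| is
   determined by J1, J2 and is left implicit. *)
Definition ell (R : realType) (n : nat) (y : Idx n -> R) (J1 J2 : {set 'I_n}) : R :=
  \sum_(T : {set 'I_n} | T \subset J2) (-1) ^+ #|T| * zS y (J1 :|: T).

Definition persp (R : realType) (u v : R) : \bar R :=
  if 0 < v then (u ^+ 2 / v)%:E
  else if u == 0 then 0%E else (+oo)%E.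

Definition PPgen (R : realType) (n : nat) (j : 'I_n)
    (y : Idx n -> R) (t : R) : Prop :=
  exists x : 'I_n -> R,
    (forall i, 0 <= x i <= 1) /\
    x j ^+ 2 <= t /\
    (forall S : Idx n, y S = \prod_(i in val S) x i).

Definition PP (R : realType) (n : nat) (j : 'I_n)
    (y : Idx n -> R) (t : R) : Prop :=
  exists (k : nat) (lam : 'I_k -> R) (ys : 'I_k -> Idx n -> R) (ts : 'I_k -> R),
    (forall l, 0 <= lam l) /\ \sum_(l < k) lam l = 1 /\
    (forall l, PPgen j (ys l) (ts l)) /\
    (forall S, y S = \sum_(l < k) lam l * ys l S) /\
    t = \sum_(l < k) lam l * ts l.

(* Mobius inversion turns the coordinates z_S into the numbers
   p_J = ell_n(J, V \ J).  At a point z_S = prod_(i in S) x_i these are the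
   probabilities that a random set with independent membership probabilities
   x_i equals J, and q_J = ell_(n-1)(J \ j, V \ J) = p_J + p_(J \ j) is the
   probability that it agrees with J off j.  Hence p_J = x_j q_J and
   sum_(J ∋ j) q_J = 1, so the sum of the perspectives p_J^2 / q_J equals
   x_j^2 <= z_jj; joint convexity of the perspective extends this to the hull.
   Conversely, nonnegative p_J satisfying the inequality are realized by a
   mixture of 0/1 points whose j-th coordinate is lowered. *)

From HB Require Import structures.
From mathcomp Require Import all_boot all_order all_algebra.
From mathcomp Require Import reals constructive_ereal.
From mathcomp Require Import ring.
Set Implicit Arguments.
Unset Strict Implicit.
Unset Printing Implicit Defensive.
Import Order.TTheory GRing.Theory Num.Theory.
Local Open Scope ring_scope.

Section Moebius.
Variables (R : comPzRingType) (n : nat).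
Implicit Types (f g : {set 'I_n} -> R) (x : 'I_n -> R) (A B J : {set 'I_n}).

Definition mobius f A B : R :=
  \sum_(T : {set 'I_n} | T \subset B) (-1) ^+ #|T| * f (A :|: T).

(* The probability that a random subset with independent membership
   probabilities [x i] contains [A] and avoids [B]. *)
Definition bern x A B : R :=
  \prod_i (if i \in A then x i else if i \in B then 1 - x i else 1).

Lemma eq_mobius f g A B : f =1 g -> mobius f A B = mobius g A B.
Proof. by move=> fg; apply: eq_bigr => T _; rewrite fg. Qed.

Lemma mobius_sum (I : finType) (c : I -> R) (f : I -> {set 'I_n} -> R) A B :
  mobius (fun U => \sum_k c k * f k U) A B = \sum_k c k * mobius (f k) A B.
Proof.
rewrite /mobius; under eq_bigr do rewrite mulr_sumr.
rewrite exchange_big; apply: eq_bigr => k _; rewrite mulr_sumr.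
by apply: eq_bigr => T _; rewrite mulrCA.
Qed.

Lemma mobius_setU1 f A B j : j \notin B ->
  mobius f A (j |: B) = mobius f A B - mobius f (j |: A) B.
Proof.
move=> jB; rewrite /mobius [in LHS](bigID (fun T : {set 'I_n} => j \in T)) /= addrC.
congr (_ + _).
  apply: eq_bigl => T; apply/andP/idP => [[sT jT]|sT].
    by apply/subsetP => i iT; move: (subsetP sT i iT); rewrite !inE;
       case: eqP => [eij|//]; rewrite -eij iT in jT.
  split; first exact: subset_trans sT (subsetUr _ _).
  by apply: contra jB => /(subsetP sT).
rewrite (reindex_onto (fun T => j |: T) (fun T => T :\ j)) => [|T /andP [_ jT]];
  last exact: setD1K.
rewrite -sumrN; apply: eq_big => [T|T /andP [_ /eqP jT]].
  rewrite setU11 andbT; apply/andP/idP => [[sT /eqP <-]|sT].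
    by apply/subsetP => i /setD1P [ij /(subsetP sT)]; rewrite !inE (negbTE ij).
  have jT : j \notin T by apply: contra jB => /(subsetP sT).
  by rewrite setU1K // eqxx setUS.
have jT' : j \notin T by rewrite -jT !inE eqxx.
by rewrite cardsU1 jT' exprS mulN1r mulNr setUCA setUA.
Qed.

Lemma mobius_prod x A B : [disjoint A & B] ->
  mobius (fun U => \prod_(i in U) x i) A B = bern x A B.
Proof.
move=> dAB; pose F i := if i \in A then 0 else if i \in B then - x i else 0.
pose G i := if i \in A then x i else 1.
have -> : bern x A B = \prod_i (F i + G i).
  apply: eq_bigr => i _; rewrite /F /G.
  by case: (i \in A); case: (i \in B); rewrite ?add0r ?addr0 // addrC.
rewrite bigA_distr /mobius big_mkcond /=; apply: eq_bigr => T _.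
have [sTB|/subsetPn [i iT iNB]] := boolP (T \subset B); last first.
  by rewrite (bigD1 i) //= iT /F (negbTE iNB); case: (i \in A); rewrite mul0r.
rewrite -prodr_const [\prod_(i in T) _]big_mkcond [\prod_(i in A :|: T) _]big_mkcond.
rewrite -big_split /=; apply: eq_bigr => i _; rewrite /F /G inE.
case iT: (i \in T); last by rewrite orbF mul1r; case: (i \in A).
have iB : i \in B by apply: (subsetP sTB).
by rewrite (disjointFl dAB iB) iB orbT mulN1r.
Qed.

Lemma mobius_inj f g :
  (forall J, mobius f J (~: J) = mobius g J (~: J)) -> f =1 g.
Proof.
move=> eqfg; suff fg k S : (#|~: S| < k)%N -> f S = g S by move=> S; apply: (fg _ S).
elim: k S => [//|k IH] S ltSk.
have mobiusE h : mobius h S (~: S) = h S +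
    \sum_(T : {set 'I_n} | (T \subset ~: S) && (T != set0)) (-1) ^+ #|T| * h (S :|: T).
  by rewrite /mobius (bigD1 set0) ?sub0set //= cards0 expr0 mul1r setU0.
have := eqfg S; rewrite !mobiusE (eq_bigr (fun T : {set 'I_n} => (-1) ^+ #|T| * g (S :|: T))).
  by move/addIr.
move=> T /andP [sTS /set0Pn [i iT]]; congr (_ * _); apply: IH.
apply: (@leq_trans #|~: S|); last by rewrite -ltnS.
apply: proper_card; apply/properP; split.
  by rewrite setCS subsetUl.
by exists i; [exact: (subsetP sTS) | rewrite !inE iT orbT].
Qed.

Lemma bern_setD1 x J j : j \in J -> bern x J (~: J) = x j * bern x (J :\ j) (~: J).
Proof.
move=> jJ; rewrite /bern (bigD1 j) //= jJ; congr (_ * _).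
rewrite [RHS](bigD1 j) //= in_setD1 in_setC eqxx jJ /= mul1r.
by apply: eq_bigr => i ij; rewrite in_setD1 ij.
Qed.

Lemma sum_bern_setD1 x j :
  \sum_(J : {set 'I_n} | j \in J) bern x (J :\ j) (~: J) = 1.
Proof.
pose F i := if i == j then 1 else x i.
pose G i := if i == j then 0 else 1 - x i.
have <- : \prod_i (F i + G i) = 1.
  by apply: big1 => i _; rewrite /F /G; case: (i == j); rewrite ?addr0 // addrC subrK.
rewrite bigA_distr big_mkcond; apply: eq_bigr => K _.
have [jK|jNK] := boolP (j \in K); last by rewrite (bigD1 j) //= (negbTE jNK) /G eqxx mul0r.
apply: eq_bigr => i _; rewrite /F /G in_setD1 in_setC.
by case: (eqVneq i j) => [->|ij] /=; [rewrite jK | case: (i \in K)].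
Qed.

End Moebius.

Lemma bern_ge0 (R : numDomainType) (n : nat) (x : 'I_n -> R) (A B : {set 'I_n}) :
  (forall i, 0 <= x i <= 1) -> 0 <= bern x A B.
Proof.
move=> x01; apply: prodr_ge0 => i _; have /andP [x0 x1] := x01 i.
by case: (i \in A) => //; case: (i \in B); rewrite ?subr_ge0.
Qed.

Section Coordinates.
Variables (R : realType) (n : nat).
Implicit Types (y : Idx n -> R) (x : 'I_n -> R) (A B J U : {set 'I_n}).

Lemma zS_set0 y : zS y set0 = 1.
Proof. by rewrite /zS insubF ?eqxx. Qed.

Lemma zS_val y (S : Idx n) : zS y (val S) = y S.
Proof. by rewrite /zS valK. Qed.

Lemma zS_prod y x : (forall S : Idx n, y S = \prod_(i in val S) x i) ->
  forall U, zS y U = \prod_(i in U) x i.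
Proof.
move=> yx U; have [->|U0] := eqVneq U set0; first by rewrite zS_set0 big_set0.
by rewrite -[U]/(val (exist _ U U0 : Idx n)) zS_val yx.
Qed.

Lemma zS_convex_comb (I : finType) (lam : I -> R) (ys : I -> Idx n -> R) y :
  \sum_l lam l = 1 -> (forall S, y S = \sum_l lam l * ys l S) ->
  forall U, zS y U = \sum_l lam l * zS (ys l) U.
Proof.
move=> lam1 yys U; have [->|U0] := eqVneq U set0.
  by rewrite zS_set0 -lam1; apply: eq_bigr => l _; rewrite zS_set0 mulr1.
rewrite -[U]/(val (exist _ U U0 : Idx n)) zS_val yys.
by apply: eq_bigr => l _; rewrite zS_val.
Qed.

Lemma ell_mobius y A B : ell y A B = mobius (zS y) A B.
Proof. by []. Qed.

Lemma ell_setD1 y J j : j \in J ->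
  ell y (J :\ j) (~: J) = ell y J (~: J) + ell y (J :\ j) (~: (J :\ j)).
Proof.
move=> jJ; rewrite !ell_mobius setCD setUC -/(j |: ~: J).
by rewrite mobius_setU1 ?setD1K ?inE ?jJ // addrC subrK.
Qed.

Lemma ell_prod y x A B : (forall S : Idx n, y S = \prod_(i in val S) x i) ->
  [disjoint A & B] -> ell y A B = bern x A B.
Proof. by move=> yx dAB; rewrite ell_mobius (eq_mobius _ _ (zS_prod yx)) mobius_prod. Qed.

Lemma ell_convex_comb (I : finType) (lam : I -> R) (ys : I -> Idx n -> R) y A B :
  \sum_l lam l = 1 -> (forall S, y S = \sum_l lam l * ys l S) ->
  ell y A B = \sum_l lam l * ell (ys l) A B.
Proof.
by move=> lam1 yys; rewrite ell_mobius (eq_mobius _ _ (zS_convex_comb lam1 yys)) mobius_sum.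
Qed.

End Coordinates.

Section Perspective.
Variable R : realType.

Lemma persp_ratio (u v : R) : 0 <= u <= v -> persp u v = (v * (u / v) ^+ 2)%:E.
Proof.
case/andP=> u0 uv; rewrite /persp; case: ifPn => [v0|].
  by congr (_%:E); field; rewrite gt_eqF.
rewrite -leNgt => v0; have v00 : v = 0 by apply/le_anti; rewrite v0 (le_trans u0).
have -> : u = 0 by apply/le_anti; rewrite u0 -v00 uv.
by rewrite eqxx v00 mul0r.
Qed.

(* Weighted Cauchy-Schwarz, from the nonnegative variance of [a] around [U / V]. *)
Lemma persp_sum_le (I : finType) (lam a v : I -> R) :
  (forall l, 0 <= lam l) -> (forall l, 0 <= v l) ->
  (persp (\sum_l lam l * (a l * v l)) (\sum_l lam l * v l)
     <= (\sum_l lam l * (a l ^+ 2 * v l))%:E)%E.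
Proof.
move=> lam0 v0; set V := \sum_l lam l * v l; set U := \sum_l lam l * (a l * v l).
set W := \sum_l lam l * (a l ^+ 2 * v l).
have lamv0 l : 0 <= lam l * v l by rewrite mulr_ge0.
rewrite /persp; case: ifPn => [V0|]; last first.
  rewrite -leNgt => V_le0; have V00 : V = 0 by apply/le_anti; rewrite V_le0 sumr_ge0.
  have lamv00 l : lam l * v l = 0 by apply: (psumr_eq0P (fun l _ => lamv0 l) V00).
  have -> : U = 0 by rewrite /U big1 // => l _; rewrite mulrCA lamv00 mulr0.
  by rewrite eqxx lee_fin sumr_ge0 // => l _; rewrite mulrCA mulr_ge0 ?sqr_ge0.
rewrite lee_fin; pose c := U / V.
have : 0 <= \sum_l lam l * v l * (a l - c) ^+ 2.
  by apply: sumr_ge0 => l _; rewrite mulr_ge0 ?sqr_ge0.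
have -> : \sum_l lam l * v l * (a l - c) ^+ 2 = W - 2 * c * U + c ^+ 2 * V.
  rewrite /W /U /V !mulr_sumr -sumrB -big_split; apply: eq_bigr => l _ /=; ring.
have -> : W - 2 * c * U + c ^+ 2 * V = W - U ^+ 2 / V by rewrite /c; field; rewrite gt_eqF.
by rewrite subr_ge0.
Qed.

End Perspective.

Lemma disjoint_setC (T : finType) (A : {set T}) : [disjoint A & ~: A].
Proof. by rewrite -subsets_disjoint. Qed.

Lemma disjoint_setD1C (T : finType) (A : {set T}) (a : T) : [disjoint A :\ a & ~: A].
Proof. by rewrite -subsets_disjoint subD1set. Qed.

Section Hull.
Variables (R : realType) (n : nat) (j : 'I_n).
Implicit Types (y : Idx n -> R) (t : R) (J : {set 'I_n}).

Lemma PPgen_ell y t : PPgen j y t ->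
  [/\ zS y [set j] ^+ 2 <= t,
      forall J, 0 <= ell y J (~: J),
      forall J, 0 <= ell y (J :\ j) (~: J),
      forall J, j \in J -> ell y J (~: J) = zS y [set j] * ell y (J :\ j) (~: J)
    & \sum_(J : {set 'I_n} | j \in J) ell y (J :\ j) (~: J) = 1].
Proof.
case=> x [x01 [xt yx]]; have xj : zS y [set j] = x j by rewrite (zS_prod yx) big_set1.
have ellC J : ell y J (~: J) = bern x J (~: J) by rewrite (ell_prod yx) ?disjoint_setC.
have ellD1 J : ell y (J :\ j) (~: J) = bern x (J :\ j) (~: J).
  by rewrite (ell_prod yx) ?disjoint_setD1C.
split=> [|J|J|J jJ|]; rewrite ?xj ?ellC ?ellD1 ?bern_ge0 //.
- exact: bern_setD1.
- by under eq_bigr do rewrite ellD1; apply: sum_bern_setD1.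
Qed.

Lemma PP_convex_comb (I : finType) (lam : I -> R) (xs : I -> 'I_n -> R) (ts : I -> R) y t :
  (forall l, 0 <= lam l) -> \sum_l lam l = 1 ->
  (forall l i, 0 <= xs l i <= 1) -> (forall l, xs l j ^+ 2 <= ts l) ->
  (forall S, y S = \sum_l lam l * \prod_(i in val S) xs l i) ->
  t = \sum_l lam l * ts l -> PP j y t.
Proof.
move=> lam0 lam1 xs01 xst yxs tts.
have reindex (F : I -> R) : \sum_l F l = \sum_(m < #|I|) F (enum_val m).
  by rewrite -(big_enum_val (A := I)).
exists #|I|, (fun m : 'I_#|I| => lam (enum_val m)),
  (fun (m : 'I_#|I|) (S : Idx n) => \prod_(i in val S) xs (enum_val m) i),
  (fun m : 'I_#|I| => ts (enum_val m)).
split=> [//|]; split; first by rewrite -reindex.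
split; first by move=> m; exists (xs (enum_val m)).
by split=> [S|]; rewrite ?yxs ?tts reindex.
Qed.

Lemma PP_ell_ge0 y t : PP j y t -> forall J, 0 <= ell y J (~: J).
Proof.
case=> k [lam [ys [ts [lam0 [lam1 [gen [yys _]]]]]]] J.
rewrite (ell_convex_comb _ _ lam1 yys); apply: sumr_ge0 => l _.
by have [_ ell0 _ _ _] := PPgen_ell (gen l); rewrite mulr_ge0.
Qed.

Lemma PP_persp_le y t : PP j y t ->
  (\sum_(J : {set 'I_n} | j \in J) persp (ell y J (~: J)) (ell y (J :\ j) (~: J)) <= t%:E)%E.
Proof.
case=> k [lam [ys [ts [lam0 [lam1 [gen [yys ->]]]]]]].
pose a l := zS (ys l) [set j]; pose v l J := ell (ys l) (J :\ j) (~: J).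
have persp_le J : j \in J ->
    (persp (ell y J (~: J)) (ell y (J :\ j) (~: J))
       <= (\sum_l lam l * (a l ^+ 2 * v l J))%:E)%E.
  move=> jJ; have split_ell l : ell (ys l) J (~: J) = a l * v l J.
    by have [_ _ _ -> //] := PPgen_ell (gen l).
  rewrite !(ell_convex_comb _ _ lam1 yys); under eq_bigr do rewrite split_ell.
  by apply: persp_sum_le => // l; have [_ _ -> _ _] := PPgen_ell (gen l).
apply: le_trans (lee_sum _ persp_le) _; rewrite sumEFin lee_fin exchange_big /=.
apply: ler_sum => l _; have [a_le _ _ _ v1] := PPgen_ell (gen l).
under eq_bigr do rewrite mulrA; rewrite -mulr_sumr /v v1 mulr1.
exact: ler_wpM2l.
Qed.

End Hull.

Section Realization.
Variables (R : realType) (n : nat) (j : 'I_n) (y : Idx n -> R) (t : R).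
Hypothesis ell_ge0 : forall J, 0 <= ell y J (~: J).
Hypothesis persp_le : (\sum_(J : {set 'I_n} | j \in J)
  persp (ell y J (~: J)) (ell y (J :\ j) (~: J)) <= t%:E)%E.
Implicit Types (J K U : {set 'I_n}).

(* [z] is the mixture, with weights [q K] over [K] containing [j], of the
   indicator point of [K] whose [j]-th coordinate is lowered to [p K / q K];
   the slack [t - S0] is added to every loop coordinate. *)
Let p J := ell y J (~: J).
Let q J := ell y (J :\ j) (~: J).
Let cond J := p J / q J.
Let weight J := if j \in J then q J else 0.
Let point J i := if i == j then cond J else (i \in J)%:R.
Let S0 := \sum_(J : {set 'I_n} | j \in J) q J * cond J ^+ 2.

Lemma p_bounds J : 0 <= p J <= q J.
Proof.
rewrite ell_ge0 /p /q; have [jJ|jNJ] := boolP (j \in J).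
  by rewrite ell_setD1 // lerDl ell_ge0.
have /setDidPl -> : [disjoint J & [set j]] by rewrite disjoint_sym disjoints1.
exact: lexx.
Qed.

Lemma q_ge0 J : 0 <= q J.
Proof. by have /andP [p0 pq] := p_bounds J; apply: le_trans pq. Qed.

Lemma cond_01 J : 0 <= cond J <= 1.
Proof.
have /andP [p0 pq] := p_bounds J; rewrite /cond.
have [q0|q0] := eqVneq (q J) 0; first by rewrite q0 invr0 mulr0 lexx ler01.
have qpos : 0 < q J by rewrite lt_def q0 q_ge0.
by rewrite divr_ge0 ?q_ge0 //= ler_pdivrMr // mul1r.
Qed.

Lemma q_cond J : q J * cond J = p J.
Proof.
have [q0|q0] := eqVneq (q J) 0; last by rewrite mulrC divfK.
by have := p_bounds J; rewrite q0 mul0r => /le_anti.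
Qed.

Lemma S0_le : S0 <= t.
Proof.
rewrite -lee_fin; apply: le_trans persp_le; rewrite /S0 -sumEFin.
by apply: lee_sum => J _; rewrite persp_ratio ?p_bounds.
Qed.

Lemma bern_point K J : j \in K -> bern (point K) J (~: J) =
  if K == j |: J then (if j \in J then cond K else 1 - cond K) else 0.
Proof.
move=> jK; have [->|KJ] := eqVneq K (j |: J).
  rewrite /bern (bigD1 j) //= in_setC /point eqxx big1 ?mulr1; first by case: (j \in J).
  move=> i ij; rewrite (negbTE ij) !inE (negbTE ij) /=.
  by case: (i \in J); rewrite ?subr0.
have [i iKJ] : exists i, (i \in K) != (i \in j |: J).
  apply/existsP; rewrite -negb_forall; apply: contra KJ => /forallP eqKJ.
  by apply/eqP/setP => i; apply/eqP/eqKJ.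
have ij : i != j by apply: contraNneq iKJ => ->; rewrite jK setU11.
rewrite /bern (bigD1 i) //= in_setC /point (negbTE ij).
move: iKJ; rewrite !inE (negbTE ij) /=.
by case: (i \in J); case: (i \in K); rewrite //= ?subrr mul0r.
Qed.

Lemma ell_mixture J : p J = \sum_K weight K * bern (point K) J (~: J).
Proof.
rewrite (bigD1 (j |: J)) //= big1 ?addr0 => [|K KJ]; last first.
  by rewrite /weight; case: ifP => jK; rewrite ?mul0r // bern_point // (negbTE KJ) mulr0.
rewrite /weight setU11 bern_point ?setU11 // eqxx.
have [jJ|jNJ] := boolP (j \in J).
  have -> : j |: J = J by apply/setUidPr; rewrite sub1set.
  by rewrite q_cond.
rewrite mulrBr mulr1 q_cond /q ell_setD1 ?setU11 // setU1K //.
by rewrite addrAC subrr add0r.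
Qed.

Lemma zS_mixture U : zS y U = \sum_K weight K * \prod_(i in U) point K i.
Proof.
move: U; apply: mobius_inj => J; rewrite -ell_mobius mobius_sum.
by under eq_bigr do rewrite mobius_prod ?disjoint_setC //; apply: ell_mixture.
Qed.

Lemma weight_sum : \sum_K weight K = 1.
Proof. by rewrite -(zS_set0 y) zS_mixture; apply: eq_bigr => K _; rewrite big_set0 mulr1. Qed.

Lemma ell_bound_PP : PP j y t.
Proof.
pose level K := cond K ^+ 2 + (t - S0).
apply: (PP_convex_comb (lam := weight) (xs := point) (ts := level)).
- by move=> K; rewrite /weight; case: ifP => // _; apply: q_ge0.
- exact: weight_sum.
- move=> K i; rewrite /point; case: eqP => _; first exact: cond_01.
  by case: (i \in K); rewrite /= ?lexx ?ler01.
- by move=> K; rewrite /point eqxx lerDl subr_ge0 S0_le.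
- by move=> S; rewrite -zS_val zS_mixture.
under eq_bigr do rewrite mulrDr; rewrite big_split /= -mulr_suml weight_sum mul1r.
suff -> : \sum_K weight K * cond K ^+ 2 = S0 by rewrite addrC subrK.
rewrite /S0 [RHS]big_mkcond; apply: eq_bigr => K _.
by rewrite /weight; case: ifP; rewrite ?mul0r.
Qed.

End Realization.

Theorem theorem1 (R : realType) (n : nat) (j : 'I_n) (y : Idx n -> R) (t : R) :
  PP j y t <->
  ((\sum_(J : {set 'I_n} | j \in J)
       persp (ell y J (~: J)) (ell y (J :\ j) (~: J)) <= t%:E)%E /\
   (forall J : {set 'I_n}, 0 <= ell y J (~: J))).
Proof.
split=> [PPyt|[persp_le ell_ge0]].
  by split; [exact: PP_persp_le PPyt | exact: PP_ell_ge0 PPyt].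
exact: ell_bound_PP ell_ge0 persp_le.
Qed.
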